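(* Let $r \geq 1$ be an integer. Then for every integer $n \geq 0$, $$\sum_{k=0}^{n} \frac{s(n,k)}{k+r} = \sum_{k=0}^{r-1} \lambda_{r,n,k}\, B_{n+k}^*,$$ where for each $k \in \{0,1,\dots,r-1\}$, $$\lambda_{r,n,k} := \sum_{\ell=0}^{r-1-k} \binom{r-1}{\ell} S(r-1-\ell,k)\, n^{\ell}$$ (with the convention $0^0 = 1$).
   Context: For $n \geq 0$, $X^{\underline{n}} := X(X-1)\cdots(X-n+1)$ ($X^{\underline{0}}=1$). The (signed) Stirling numbers of the first kind $s(n,k)$ are defined by $X^{\underline{n}} = \sum_{k=0}^{n} s(n,k) X^k$, and the Stirling numbers of the second kind $S(n,k)$ by $X^n = \sum_{k=0}^{n} S(n,k) X^{\underline{k}}$ (for all $n\ge 0$), with $s(n,k)=S(n,k)=0$ when $n<k$; in particular $S(0,0)=1$. The Bernoulli numbers of the second kind $B_n^*$ are defined by $\frac{t}{\log(1+t)} = \sum_{n \ge 0} B_n^* \frac{t^n}{n!}$ (equivalently $B_n^* = \int_0^1 x^{\underline{n}}\,dx$). *)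

From mathcomp Require Import all_boot all_order all_algebra.
Set Implicit Arguments. Unset Strict Implicit. Unset Printing Implicit Defensive.
Import Order.TTheory GRing.Theory Num.Theory.
Local Open Scope ring_scope.

Definition falling_poly (n : nat) : {poly rat} := \prod_(i < n) ('X - (i%:R)%:P).

(* Signed Stirling numbers of the first kind: coefficient of X^k in X^{\underline n}
   (zero automatically when k > n). *)
Definition stirling1 (n k : nat) : rat := (falling_poly n)`_k.

Fixpoint stirling2 (n k : nat) : nat :=
  match n, k with
  | 0, 0 => 1
  | 0, _.+1 => 0
  | _.+1, 0 => 0
  | m.+1, j.+1 => j.+1 * stirling2 m j.+1 + stirling2 m j
  end%N.

Definition int01 (p : {poly rat}) : rat := \sum_(i < size p) p`_i / (i.+1)%:R.

Definition bstar (n : nat) : rat := int01 (falling_poly n).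

Definition lambda (r n k : nat) : rat :=
  \sum_(l < (r - k)%N) ('C(r.-1, l))%:R * (stirling2 (r.-1 - l) k)%:R * (n%:R) ^+ l.

(* Write x^(r-1) = ((x - n) + n)^(r-1) and expand binomially.  Each power
   (x - n)^m is the combination of the falling factorials (x - n)^{\underline k}
   with coefficients S(m, k), and x^{\underline n} (x - n)^{\underline k} is
   x^{\underline (n+k)}; this gives
   x^(r-1) x^{\underline n} = \sum_k lambda_{r,n,k} x^{\underline (n+k)}.
   Integrating over [0, 1] yields the identity, the left-hand side because
   multiplying by x^(r-1) shifts the k-th coefficient to degree k + r - 1. *)

From HB Require Import structures.
From mathcomp Require Import all_boot all_order all_algebra zify.
Set Implicit Arguments. Unset Strict Implicit. Unset Printing Implicit Defensive.
Import GRing.Theory.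
Local Open Scope ring_scope.

Lemma stirling2_eq0 m k : (m < k)%N -> stirling2 m k = 0%N.
Proof. by elim: m k => [|m IH] [|k] //= ltmk; rewrite !IH ?muln0 // ltnW. Qed.

Section FallingFactorial.
Variable R : comPzRingType.
Implicit Types (x : R) (k m n r N : nat).

Definition ffact x k : R := \prod_(i < k) (x - i%:R).

Lemma ffactS x k : ffact x k.+1 = ffact x k * (x - k%:R).
Proof. by rewrite /ffact big_ord_recr. Qed.

Lemma ffactD x n k : ffact x (n + k) = ffact x n * ffact (x - n%:R) k.
Proof.
rewrite /ffact big_split_ord; congr (_ * _); apply: eq_bigr => i _.
by rewrite natrD opprD addrA.
Qed.

Lemma mulr_ffact x k : x * ffact x k = ffact x k.+1 + ffact x k *+ k.
Proof. by rewrite ffactS mulrBr mulr_natr subrK mulrC. Qed.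

Lemma exprn_ffact x N m : (m < N)%N ->
  x ^+ m = \sum_(k < N) ffact x k *+ stirling2 m k.
Proof.
elim: m N => [|m IH] [|N] // ltmN.
  rewrite big_ord_recl big1 => [|k _]; last by rewrite mulr0n.
  by rewrite /ffact big_ord0 addr0.
rewrite exprS (IH N.+1 (ltnW ltmN)) mulr_sumr.
under eq_bigr do rewrite mulrnAr mulr_ffact mulrnDl -mulrnA.
rewrite big_split [RHS]big_ord_recl mulr0n add0r /=.
under [RHS]eq_bigr do rewrite mulrnDr.
rewrite big_split addrC /=; congr (_ + _).
  by rewrite big_ord_recl mul0n mulr0n add0r; apply: eq_bigr => k _; rewrite mulnC.
by rewrite big_ord_recr /= stirling2_eq0 // mulr0n addr0.
Qed.

Lemma exprn_mul_ffact x r n :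
  x ^+ r * ffact x n = \sum_(k < r.+1)
    ffact x (n + k) *+ \sum_(l < r.+1) 'C(r, l) * stirling2 (r - l) k * n ^ l.
Proof.
under eq_bigr do rewrite -sumrMnr.
rewrite exchange_big /= -{1}(subrK n%:R x) exprDn mulr_suml.
apply: eq_bigr => l _.
rewrite (exprn_ffact _ (leq_ltn_trans (leq_subr l r) (ltnSn r))) -natrX mulr_natr.
rewrite -mulrnA mulrnAl mulr_suml -sumrMnl; apply: eq_bigr => k _.
by rewrite mulrnAl -mulrnA mulrC -ffactD mulnCA mulnC (mulnC 'C(r, l)).
Qed.

End FallingFactorial.

Lemma lambdaE r n k :
  lambda r.+1 n k = (\sum_(l < r.+1) 'C(r, l) * stirling2 (r - l) k * n ^ l)%:R.
Proof.
rewrite /lambda /= (big_ord_widen r.+1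
  (fun l => 'C(r, l)%:R * (stirling2 (r - l) k)%:R * n%:R ^+ l)) ?leq_subr //.
rewrite big_mkcond natr_sum; apply: eq_bigr => l _ /=.
rewrite natrM natrX natrM; case: ltnP => // le_l.
by rewrite stirling2_eq0 ?mulr0 ?mul0r //; move: (ltn_ord l) le_l; lia.
Qed.

Lemma size_falling_poly n : size (falling_poly n) = n.+1.
Proof. by rewrite size_prod_XsubC -[index_enum _]enumT -cardT card_ord. Qed.

Lemma falling_polyE n : falling_poly n = ffact 'X n.
Proof. by apply: eq_bigr => i _; rewrite polyC_natr. Qed.

Lemma int01_widen N (p : {poly rat}) :
  (size p <= N)%N -> int01 p = \sum_(i < N) p`_i / i.+1%:R.
Proof.
move=> le_pN; rewrite /int01 (big_ord_widen N (fun i => p`_i / i.+1%:R)) //.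
rewrite big_mkcond; apply: eq_bigr => i _ /=.
by case: ltnP => // le_p_i; rewrite nth_default ?mul0r.
Qed.

Lemma int01_is_nmod_morphism : nmod_morphism int01.
Proof.
split=> [|p q]; first by rewrite /int01 size_poly0 big_ord0.
rewrite !(int01_widen (leq_maxl (size p) (size q)))
  ?(int01_widen (leq_maxr (size p) (size q))) ?(int01_widen (size_polyD p q)) //.
by rewrite -big_split; apply: eq_bigr => i _; rewrite coefD mulrDl.
Qed.

HB.instance Definition _ :=
  GRing.isNmodMorphism.Build {poly rat} rat int01 int01_is_nmod_morphism.

Lemma int01_mulXn m (p : {poly rat}) :
  int01 ('X^m * p) = \sum_(k < size p) p`_k / (k + m.+1)%:R.
Proof.
have le_size : (size ('X^m * p)%R <= m + size p)%N.
  by rewrite (leq_trans (size_polyMleq _ _)) // size_polyXn.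
rewrite (int01_widen le_size) big_split_ord /= big1 ?add0r => [|i _]; last first.
  by rewrite coefXnM ltn_ord mul0r.
by apply: eq_bigr => k _; rewrite coefXnM ltnNge leq_addr addKn addnS addnC.
Qed.

Theorem theorem6 (r : nat) (hr : (1 <= r)%N) (n : nat) :
  \sum_(k < n.+1) stirling1 n k / (k + r)%:R
  = \sum_(k < r) lambda r n k * bstar (n + k).
Proof.
case: r hr => [//|r] _.
rewrite -(size_falling_poly n) -int01_mulXn falling_polyE exprn_mul_ffact.
rewrite raddf_sum; apply: eq_bigr => k _.
by rewrite raddfMn lambdaE mulr_natl -falling_polyE.
Qed.
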